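(* With the setting in the context, for all $s,s'\in\mathrm{hom}(C,G)_{-1}$ and $v,v'\in\mathrm{hom}(C,G)^1$: (i) $\mathcal A_s\mathcal B_v=\mathcal B_v\mathcal A_s$; (ii) $\mathcal A_s\mathcal A_{s'}=\delta(s,s')\mathcal A_s$ and $\mathcal B_v\mathcal B_{v'}=\delta(v,v')\mathcal B_v$, where $\delta(\cdot,\cdot)$ is the Kronecker delta; (iii) $\sum_{s\in\mathrm{hom}(C,G)_{-1}}\mathcal A_s=\mathbb 1$ and $\sum_{v\in\mathrm{hom}(C,G)^1}\mathcal B_v=\mathbb 1$.
   Context: $(C_\bullet,\partial^C_\bullet)$ is a chain complex with each $C_n$ free abelian on a finite set $K_n$, $K_n\ne\emptyset$ for finitely many $n$; $(G_\bullet,\partial^G_\bullet)$ is a chain complex of finite abelian groups. $\mathrm{hom}(C,G)^p=\prod_n\mathrm{Hom}(C_n,G_{n-p})$ with $(\delta^pf)_n=f_{n-1}\partial^C_n-(-1)^p\partial^G_{n-p}f_n$. $\mathrm{hom}(C,G)_p=\mathrm{Hom}(\mathrm{hom}(C,G)^p,U(1))$ (written additively), $\chi_m(f)=m(f)$, $\delta_1m=m\circ\delta^0$. $\mathcal H=\bigotimes_n\bigotimes_{x\in K_n}\mathbb C[G_n]$ with orthonormal basis $|f\rangle$, $f\in\mathrm{hom}(C,G)^0$; $P_t|f\rangle=|f+t\rangle$, $Q_m|f\rangle=\chi_m(f)|f\rangle$; $A_t=P_{\delta^{-1}t}$ ($t\in\mathrm{hom}(C,G)^{-1}$), $B_m=Q_{\delta_1m}$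 ($m\in\mathrm{hom}(C,G)_1$). $\mathcal A_s=\frac1{|\mathrm{hom}(C,G)^{-1}|}\sum_{t\in\mathrm{hom}(C,G)^{-1}}\chi_s(t)A_t$ and $\mathcal B_v=\frac1{|\mathrm{hom}(C,G)_1|}\sum_{m\in\mathrm{hom}(C,G)_1}\chi_m(v)B_m$. *)

From HB Require Import structures.
From mathcomp Require Import all_boot all_order all_algebra all_field.
From mathcomp Require Import finmap.
From mathcomp Require Import boolp classical_sets cardinality fsbigop.

Set Implicit Arguments.
Unset Strict Implicit.
Unset Printing Implicit Defensive.

Import Order.TTheory GRing.Theory Num.Theory.
Local Open Scope ring_scope.

(* Encoding of the setting:
   - the bases K_n (n : int) of the free chain complex C are packaged as one
     finite graded set X with degree map [deg : X -> int], K_n = {x | deg x = n};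
   - the boundary of C is given by integer coefficients:
       d^C x = sum_y a x y * y ;
   - G : int -> finZmodType, with boundary maps dG n : G n -> G (n-1);
   - since C_n is free on K_n, Hom(C_n, G_m) = functions K_n -> G_m, hence
       hom(C,G)^p = prod_n Hom(C_n, G_{n-p}) = { f : forall x : X, G (deg x - p) }. *)

Section Setting.
Variables (X : finType) (deg : X -> int) (a : X -> X -> int)
          (G : int -> finZmodType) (dG : forall n : int, G n -> G (n - 1)).

(* total transport between the groups G m and G m' (zero if m <> m') *)
Definition castG (m m' : int) (g : G m) : G m' :=
  match m =P m' with
  | ReflectT e => eq_rect m (fun k => G k) g m' e
  | ReflectF _ => 0
  end.

Definition cochain (p : int) := {dffun forall x : X, G (deg x - p)}.

Definition cadd (p : int) (f g : cochain p) : cochain p :=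
  finfun (fun x : X => (f x + g x : G (deg x - p))).
Definition czero (p : int) : cochain p :=
  finfun (fun x : X => (0 : G (deg x - p))).

(* (delta^p f)_n = f_{n-1} o d^C_n - (-1)^p d^G_{n-p} o f_n *)
Definition delta (p : int) (f : cochain p) : cochain (p + 1) :=
  finfun (fun x : X =>
    ((\sum_(y : X) castG (deg x - (p + 1)) (f y *~ a x y))
     - castG (deg x - (p + 1)) (dG (f x)) *~ ((-1) ^ p) : G (deg x - (p + 1)))).

(* hom(C,G)_p = Hom(hom(C,G)^p, U(1)), U(1) = unit circle in algC;
   m in hom(C,G)_p is represented by its character chi_m : hom^p -> U(1). *)
Definition dual (p : int) : set {ffun cochain p -> algC} :=
  [set chi | (forall f, `|chi f| = 1) /\
             (forall f g, chi (cadd f g) = chi f * chi g)]%classic.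

Definition card_dual (p : int) : nat := #|` fset_set (@dual p)|%fset.

(* operators on H = C[hom^0] (orthonormal basis |f>), via matrix entries
   A (g, f) = <g| A |f> *)
Definition op := {ffun (cochain 0 * cochain 0) -> algC}.

Definition omul (A B : op) : op :=
  [ffun gf : cochain 0 * cochain 0 => \sum_(k : cochain 0) A (gf.1, k) * B (k, gf.2)].
Definition oid : op := [ffun gf : cochain 0 * cochain 0 => (gf.1 == gf.2)%:R].
Definition oscale (c : algC) (A : op) : op := [ffun gf => c * A gf].

Definition Pop (t : cochain 0) : op :=
  [ffun gf : cochain 0 * cochain 0 => (gf.1 == cadd gf.2 t)%:R].
Definition Qop (m : {ffun cochain 0 -> algC}) : op :=
  [ffun gf : cochain 0 * cochain 0 => (gf.1 == gf.2)%:R * m gf.2].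

Definition Aop (t : cochain (-1)) : op := Pop (delta t).
Definition Bop (m : {ffun cochain 1 -> algC}) : op :=
  Qop [ffun f : cochain 0 => m (delta f)].

Definition calA (s : {ffun cochain (-1) -> algC}) : op :=
  oscale (#|{: cochain (-1)}|%:R)^-1 (\sum_(t : cochain (-1)) oscale (s t) (Aop t)).
Definition calB (v : cochain 1) : op :=
  oscale ((card_dual 1)%:R)^-1
    (\sum_(m \in @dual 1) oscale (m v) (Bop m)).

End Setting.

(* The translations A_t = P_{delta t} form a representation of the
   finite abelian group hom(C,G)^{-1}, so calA_s is the image of the character s
   in its group algebra; orthogonality of characters makes these images orthogonal
   idempotents, and summing over all s leaves A_0 = 1.  Summing a character over
   the dual group detects zero, so calB_v is the diagonal projector onto the
   cochains f with delta f = -v; these are clearly orthogonal idempotents summing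
   to 1, and they commute with the translations P_{delta t} because
   delta (delta t) = 0.  The facts needed about the dual of a finite abelian group
   (it is finite, of the same order, and separates points) come from the theory of
   its linear irreducible characters. *)

From HB Require Import structures.
From mathcomp Require Import all_boot all_order all_algebra all_field.
From mathcomp Require Import finmap.
From mathcomp Require Import boolp classical_sets cardinality fsbigop.
From mathcomp Require Import all_fingroup all_solvable all_character.
From mathcomp Require Import zify.

Set Implicit Arguments.
Unset Strict Implicit.
Unset Printing Implicit Defensive.

Import GRing.Theory Num.Theory.
Local Open Scope ring_scope.

Lemma fixed_by_mul_eq0 (R : idomainType) (c x : R) : c != 1 -> x = c * x -> x = 0.
Proof.
move=> c_neq1 /eqP; rewrite -subr_eq0 -{1}[x]mul1r -mulrBl mulf_eq0 subr_eq0.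
by rewrite eq_sym (negbTE c_neq1) => /eqP.
Qed.

Lemma natr_card_neq0 (U : finZmodType) : #|U|%:R != 0 :> algC.
Proof. by rewrite pnatr_eq0 -lt0n; apply/card_gt0P; exists 0. Qed.

Section UnitCharacters.
Variable U : finZmodType.

Definition unit_char (chi : U -> algC) :=
  (forall x, `|chi x| = 1) /\ {morph chi : x y / x + y >-> x * y}.

Definition unit_chars : set {ffun U -> algC} := [set chi | unit_char chi]%classic.

Local Notation one_char := [ffun=> 1 : algC].

Lemma unit_char_neq0 chi x : unit_char chi -> chi x != 0.
Proof. by case=> chi_norm _; rewrite -normr_eq0 chi_norm oner_eq0. Qed.

Lemma unit_char0 chi : unit_char chi -> chi 0 = 1.
Proof.
move=> chiU; apply: (mulfI (unit_char_neq0 0 chiU)).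
by rewrite mulr1 -chiU.2 addr0.
Qed.

Lemma unit_charB chi x y : unit_char chi -> chi (x - y) = chi x / chi y.
Proof.
move=> chiU; apply: (mulIf (unit_char_neq0 y chiU)).
by rewrite -chiU.2 subrK divfK ?unit_char_neq0.
Qed.

Lemma unit_char_const1 : unit_char one_char.
Proof. by split=> [x|x y]; rewrite !ffunE ?normr1 ?mulr1. Qed.

Lemma unit_charM chi1 chi2 :
  unit_char chi1 -> unit_char chi2 -> unit_char (fun x => chi1 x * chi2 x).
Proof.
move=> [n1 m1] [n2 m2]; split=> [x|x y]; first by rewrite normrM n1 n2 mulr1.
by rewrite m1 m2 mulrACA.
Qed.

Lemma unit_charV chi : unit_char chi -> unit_char (fun x => (chi x)^-1).
Proof.
move=> [n m]; split=> [x|x y]; first by rewrite normfV n invr1.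
by rewrite m invfM.
Qed.

Lemma unit_char_expn_card chi x : unit_char chi -> chi x ^+ #|U| = 1.
Proof.
move=> chiU; have chiMn n : chi (x *+ n) = chi x ^+ n.
  elim: n => [|n IHn]; first by rewrite mulr0n expr0 unit_char0.
  by rewrite mulrS exprS chiU.2 IHn.
by rewrite -chiMn -FinRing.zmodXgE -cardsT expg_cardG ?inE ?unit_char0.
Qed.

(* Unit characters take values among the #|U|-th roots of unity. *)
Lemma finite_unit_chars : finite_set unit_chars.
Proof.
pose P : {poly algC} := 'X^#|U| - 1%:P.
have [r def_P] := closed_field_poly_normal P.
have P_monic : P \is monic by apply: monicXnsubC; apply/card_gt0P; exists 0.
have root_r z : z ^+ #|U| = 1 -> z \in r.
  move=> z_root; rewrite -root_prod_XsubC -[X in root X](scale1r _).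
  by rewrite -(monicP P_monic) -def_P /root !hornerE z_root subrr.
apply: (@sub_finite_set _ _
   ((fun h : {ffun U -> 'I_(size r).+1} => [ffun x => nth 0 r (h x)]) @` setT)%classic).
  move=> chi chiU; exists [ffun x => inord (index (chi x) r)] => //.
  apply/ffunP => x; rewrite !ffunE inordK ?nth_index ?root_r ?unit_char_expn_card //.
  by rewrite ltnS index_size.
by apply: finite_image; apply: finite_finset.
Qed.

Lemma mem_unit_chars chi : chi \in fset_set unit_chars <-> unit_char chi.
Proof. by rewrite (in_fset_set finite_unit_chars); split=> [/set_mem|/mem_set]. Qed.

Lemma sum_unit_char (chi : {ffun U -> algC}) :
  unit_char chi -> \sum_x chi x = (chi == one_char)%:R * #|U|%:R.
Proof.
move=> chiU; have [->|chi_neq1] := eqVneq chi one_char.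
  by rewrite mul1r (eq_bigr (fun=> 1)) ?sumr_const // => x _; rewrite ffunE.
have /existsP[y chiy_neq1] : [exists y, chi y != 1].
  apply: contraNT chi_neq1 => /existsPn chi1.
  by apply/eqP/ffunP => y; rewrite ffunE; apply/eqP; have := chi1 y; rewrite negbK.
rewrite mul0r; apply: (fixed_by_mul_eq0 chiy_neq1).
rewrite mulr_sumr (reindex_inj (addIr y)) /=.
by apply: eq_bigr => x _; rewrite chiU.2 mulrC.
Qed.

Lemma unit_char_conv (s s' : {ffun U -> algC}) u :
  unit_char s -> unit_char s' ->
  \sum_t s t * s' (u - t) = (s == s')%:R * #|U|%:R * s' u.
Proof.
move=> sU s'U; pose chi := [ffun t => s t / s' t].
have chiU : unit_char chi.
  by have [n m] := unit_charM sU (unit_charV s'U); split=> [x|x y]; rewrite !ffunE.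
have chi1E : (chi == one_char) = (s == s').
  apply/eqP/eqP => [/ffunP chi1|eq_ss']; apply/ffunP => t; last first.
    by rewrite !ffunE eq_ss' divff ?unit_char_neq0.
  apply: (divIf (unit_char_neq0 t s'U)); have := chi1 t.
  by rewrite !ffunE divff ?unit_char_neq0.
rewrite mulrC -chi1E -sum_unit_char // mulr_sumr; apply: eq_bigr => t _.
by rewrite unit_charB // ffunE mulrCA.
Qed.

(* Taken among the irreducible characters of U, which are linear as U is abelian. *)
Lemma exists_unit_char_neq1 w : w != 0 -> exists chi, unit_char chi /\ chi w != 1.
Proof.
move=> w_neq0; have : w \notin (1%g : {set U}).
  by rewrite inE; apply: contra w_neq0 => /eqP ->.
rewrite -(TI_cfker_irr [set: U]%G) => /bigcapP w_notin_ker.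
have /existsP[i w_notin_keri] : [exists i : Iirr [set: U]%G, w \notin cfker 'chi_i].
  apply: contraT => /existsPn w_in_ker; case: w_notin_ker => i _.
  by have := w_in_ker i; rewrite negbK.
have lin : 'chi[[set: U]%G]_i \is a linear_char.
  by move/char_abelianP: (FinRing.zmod_abelian [set: U]); apply.
exists ('chi_i : U -> algC); split; first split.
- by move=> x; rewrite normC_lin_char ?inE.
- by move=> x y; rewrite -(lin_charM lin) ?inE.
- by move: w_notin_keri; rewrite cfkerEirr inE (lin_char1 lin).
Qed.

Lemma sum_unit_chars_at w :
  \sum_(m <- fset_set unit_chars) m w = (w == 0)%:R * #|` fset_set unit_chars|%:R.
Proof.
have [->|w_neq0] := eqVneq w 0.
  rewrite mul1r card_fset_sum1 natr_sum; apply: eq_big_seq => m /mem_unit_chars mU.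
  exact: unit_char0.
have [c0 [c0U c0w]] := exists_unit_char_neq1 w_neq0.
pose mulc0 (m : {ffun U -> algC}) := [ffun x => c0 x * m x].
have mulc0_inj : injective mulc0.
  move=> m1 m2 /ffunP eq_m; apply/ffunP => x; have := eq_m x; rewrite !ffunE.
  exact/mulfI/unit_char_neq0.
have mulc0_perm : perm_eq (fset_set unit_chars) (map mulc0 (fset_set unit_chars)).
  apply: uniq_perm; rewrite ?map_inj_uniq ?fset_uniq // => m.
  apply/idP/idP => [/mem_unit_chars mU|/mapP[m' /mem_unit_chars m'U ->]]; last first.
    have [n mul] := unit_charM c0U m'U.
    by apply/mem_unit_chars; split=> [x|x y]; rewrite !ffunE.
  apply/mapP; exists [ffun x => (c0 x)^-1 * m x].
    have [n mul] := unit_charM (unit_charV c0U) mU.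
    by apply/mem_unit_chars; split=> [x|x y]; rewrite !ffunE.
  by apply/ffunP => x; rewrite !ffunE mulVKf ?unit_char_neq0.
rewrite mul0r; apply: (fixed_by_mul_eq0 c0w).
rewrite [LHS](perm_big _ mulc0_perm) big_map mulr_sumr.
by apply: eq_bigr => m _; rewrite ffunE.
Qed.

(* Double counting of \sum_w \sum_m m w, using the two orthogonality relations. *)
Lemma card_unit_chars : #|` fset_set unit_chars| = #|U|.
Proof.
apply/eqP; rewrite -(eqr_nat algC); apply/eqP.
have : \sum_(w : U) \sum_(m <- fset_set unit_chars) m w =
       \sum_(m <- fset_set unit_chars) \sum_(w : U) m w by exact: exchange_big.
under eq_bigr do rewrite sum_unit_chars_at.
rewrite (bigD1 0) //= eqxx mul1r big1 ?addr0 => [->|w /negbTE ->]; last exact: mul0r.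
rewrite (eq_big_seq (fun m => (m == one_char)%:R * #|U|%:R)); last first.
  by move=> m /mem_unit_chars mU; rewrite sum_unit_char.
rewrite -big_distrl (bigD1_seq one_char) ?fset_uniq //=; last first.
  exact/mem_unit_chars/unit_char_const1.
by rewrite eqxx big1 ?addr0 ?mul1r // => m /negbTE ->.
Qed.

End UnitCharacters.

Section CochainZmodule.
Variables (X : finType) (deg : X -> int) (G : int -> finZmodType) (p : int).

Definition copp (f : cochain deg G p) : cochain deg G p :=
  finfun (fun x : X => (- f x : G (deg x - p))).

Lemma caddA : associative (@cadd X deg G p).
Proof. by move=> f g h; apply/ffunP => x; rewrite !ffunE; exact: addrA. Qed.

Lemma caddC : commutative (@cadd X deg G p).
Proof. by move=> f g; apply/ffunP => x; rewrite !ffunE; exact: addrC. Qed.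

Lemma cadd0 : left_id (@czero X deg G p) (@cadd X deg G p).
Proof. by move=> f; apply/ffunP => x; rewrite !ffunE; exact: add0r. Qed.

Lemma caddN : left_inverse (@czero X deg G p) copp (@cadd X deg G p).
Proof. by move=> f; apply/ffunP => x; rewrite !ffunE; exact: addNr. Qed.

HB.instance Definition _ := Finite.on (cochain deg G p).
HB.instance Definition _ :=
  GRing.isZmodule.Build (cochain deg G p) caddA caddC cadd0 caddN.

Lemma caddE (f g : cochain deg G p) : cadd f g = f + g.
Proof. by []. Qed.

End CochainZmodule.

Lemma castG_is_zmod_morphism (G : int -> finZmodType) m m' :
  zmod_morphism (@castG G m m').
Proof.
by move=> g h; rewrite /castG; case: (m =P m') => [e|_]; [subst m' | rewrite subr0].
Qed.

HB.instance Definition _ (G : int -> finZmodType) m m' :=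
  GRing.isZmodMorphism.Build (G m) (G m') (@castG G m m')
    (@castG_is_zmod_morphism G m m').

Lemma subrACA (V : zmodType) (u v w z : V) : u - v - (w - z) = u - w - (v - z).
Proof. by rewrite !opprD addrACA. Qed.

Section Coboundary.
Variables (X : finType) (deg : X -> int) (a : X -> X -> int)
          (G : int -> finZmodType) (dG : forall n : int, G n -> G (n - 1)).
Hypothesis dG_add : forall n : int, {morph @dG n : g h / g + h}.

Lemma castG_id m (g : G m) : castG m g = g.
Proof. by rewrite /castG; case: (m =P m) => // e; rewrite (eq_axiomK e). Qed.

Lemma castG_neq m m' (g : G m) : m != m' -> castG m' g = 0.
Proof. by rewrite /castG; case: (m =P m'). Qed.

Lemma castG_comp m m' m'' (g : G m) : m = m' \/ m' = m'' ->
  castG m'' (castG m' g) = castG m'' g.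
Proof. by case=> <-; rewrite castG_id. Qed.

Lemma dG_is_nmod_morphism n : nmod_morphism (@dG n).
Proof.
split; last exact: dG_add.
by apply: (addIr (@dG n 0)); rewrite -dG_add !add0r.
Qed.

HB.instance Definition _ n :=
  GRing.isNmodMorphism.Build (G n) (G (n - 1)) (@dG n) (dG_is_nmod_morphism n).

Lemma dG_castG m m' (g : G m) :
  dG (castG m' g) = castG (m' - 1) (dG g).
Proof.
have [<-|neq_mm'] := eqVneq m m'; first by rewrite !castG_id.
rewrite !castG_neq ?raddf0 //; apply: contra neq_mm' => /eqP eq_m1.
by apply/eqP; rewrite -[m](subrK 1) eq_m1 subrK.
Qed.

Lemma delta_is_zmod_morphism p : zmod_morphism (@delta X deg a G dG p).
Proof.
move=> f g; apply/ffunP => x; rewrite !ffunE.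
under eq_bigr do rewrite !ffunE mulrzBl raddfB.
by rewrite sumrB [in LHS]raddfB [in LHS]raddfB mulrzBl subrACA.
Qed.

Hypothesis a_deg : forall x y, a x y != 0 -> deg y = deg x - 1.
Hypothesis dC_dC : forall x z, \sum_y a x y * a y z = 0.
Hypothesis dG_dG : forall n (g : G n), dG (dG g) = 0.

Lemma delta_delta p (f : cochain deg G p) : delta a dG (delta a dG f) = 0.
Proof.
apply/ffunP => x; rewrite [RHS]ffunE ffunE.
pose s : int := (-1) ^ p; set n := deg x - (p + 1 + 1).
have sgnS : (-1) ^ (p + 1) = - s by rewrite exprzDr ?unitrN1 // expr1z mulrN1.
have cast_delta y : castG n (delta a dG f y *~ a x y) =
    \sum_z castG n (f z *~ (a x y * a y z)) - castG n (dG (f y)) *~ (s * a x y).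
  have [->|axy_neq0] := eqVneq (a x y) 0.
    rewrite !mulr0z raddf0 mulr0 mulr0z subr0 big1 // => z _.
    by rewrite mul0r mulr0z raddf0.
  have deg_y : deg y - (p + 1) = n by rewrite /n (a_deg axy_neq0); lia.
  rewrite ffunE mulrzBl raddfB mulrz_suml raddf_sum -mulrzA raddfMz /=.
  rewrite castG_comp; last by right.
  congr (_ - _); apply: eq_bigr => z _.
  rewrite raddfMz /= castG_comp; last by right.
  by rewrite mulrC mulrzA !raddfMz.
have cast_dG_delta : castG n (dG (delta a dG f x)) =
    \sum_z castG n (dG (f z)) *~ a x z.
  rewrite ffunE raddfB raddf_sum raddfMz /= dG_castG dG_dG !raddf0 mul0rz subr0.
  rewrite raddf_sum; apply: eq_bigr => z _; rewrite dG_castG raddfMz /=.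
  have [->|axz_neq0] := eqVneq (a x z) 0; first by rewrite !mulr0z !raddf0.
  by rewrite castG_comp ?raddfMz //; left; rewrite (a_deg axz_neq0); lia.
rewrite cast_dG_delta sgnS (eq_bigr _ (fun y _ => cast_delta y)) sumrB exchange_big /=.
rewrite big1 => [|z _]; last by rewrite -raddf_sum -mulrz_sumr dC_dC mulr0z raddf0.
(* What remains is \sum_y a x y dG (f y), counted with the signs -(-1)^p and (-1)^p. *)
rewrite sub0r mulrNz opprK mulrz_suml addrC; apply/eqP; rewrite subr_eq0; apply/eqP.
by apply: eq_bigr => z _; rewrite -mulrzA mulrC.
Qed.

End Coboundary.

(* algC is no lmodType over itself: operators are scaled as functions into algC^o. *)
HB.instance Definition _ (X : finType) (deg : X -> int) (G : int -> finZmodType) :=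
  GRing.Lmodule.copy (@op X deg G) {ffun (cochain deg G 0 * cochain deg G 0) -> algC^o}.

Section Operators.
Variables (X : finType) (deg : X -> int) (G : int -> finZmodType).
Local Notation H := (cochain deg G 0).
Local Notation op := (@op X deg G).

Lemma oscaleE c (A : op) : oscale c A = c *: A.
Proof. by apply/ffunP => gf; rewrite !ffunE. Qed.

Lemma omulZl c (A B : op) : omul (c *: A) B = c *: omul A B.
Proof.
apply/ffunP => gf; rewrite !ffunE scaler_sumr.
by apply: eq_bigr => k _; rewrite ffunE scalerAl.
Qed.

Lemma omulZr c (A B : op) : omul A (c *: B) = c *: omul A B.
Proof.
apply/ffunP => gf; rewrite !ffunE scaler_sumr.
by apply: eq_bigr => k _; rewrite ffunE scalerAr.
Qed.

Lemma omul_suml I (r : seq I) (P : pred I) (F : I -> op) B :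
  omul (\sum_(i <- r | P i) F i) B = \sum_(i <- r | P i) omul (F i) B.
Proof.
apply/ffunP => gf; rewrite ffunE sum_ffunE.
under eq_bigr do rewrite sum_ffunE mulr_suml.
by rewrite exchange_big; apply: eq_bigr => i _; rewrite ffunE.
Qed.

Lemma omul_sumr I (r : seq I) (P : pred I) A (F : I -> op) :
  omul A (\sum_(i <- r | P i) F i) = \sum_(i <- r | P i) omul A (F i).
Proof.
apply/ffunP => gf; rewrite ffunE sum_ffunE.
under eq_bigr do rewrite sum_ffunE mulr_sumr.
by rewrite exchange_big; apply: eq_bigr => i _; rewrite ffunE.
Qed.

Lemma Pop0 : Pop 0 = oid deg G.
Proof. by apply/ffunP => gf; rewrite !ffunE caddE addr0. Qed.

Lemma omul_Pop (t t' : H) : omul (Pop t) (Pop t') = Pop (t + t').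
Proof.
apply/ffunP => -[g f]; rewrite !ffunE /= (bigD1 ((f : H) + t')) //= !ffunE /= !caddE.
rewrite eqxx mulr1 big1 ?addr0 => [|k /negbTE k_neq]; last first.
  by rewrite !ffunE /= caddE k_neq mulr0.
by rewrite [t + t']addrC addrA.
Qed.

Lemma Qop1 : Qop [ffun=> 1 : algC] = oid deg G.
Proof. by apply/ffunP => gf; rewrite !ffunE mulr1. Qed.

Lemma Qop_sum I (r : seq I) (P : pred I) (F : I -> {ffun H -> algC}) :
  \sum_(i <- r | P i) Qop (F i) = Qop (\sum_(i <- r | P i) F i).
Proof.
apply/ffunP => gf; rewrite !ffunE !sum_ffunE mulr_sumr.
by apply: eq_bigr => i _; rewrite ffunE.
Qed.

Lemma omul_Qop (m m' : {ffun H -> algC}) :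
  omul (Qop m) (Qop m') = Qop [ffun f => m f * m' f].
Proof.
apply/ffunP => -[g f]; rewrite !ffunE /= (bigD1 f) //= !ffunE eqxx mul1r.
rewrite big1 ?addr0 => [|k /negbTE k_neq]; last by rewrite !ffunE /= k_neq mul0r mulr0.
by rewrite mulrA.
Qed.

Lemma Pop_Qop_comm (t : H) (m : {ffun H -> algC}) :
  (forall f, m (f + t) = m f) ->
  omul (Pop t) (Qop m) = omul (Qop m) (Pop t).
Proof.
move=> m_inv; apply/ffunP => -[g f]; rewrite !ffunE /=.
rewrite (bigD1 f) // big1 => [|k /negbTE k_neq]; last first.
  by rewrite !ffunE /= k_neq mul0r mulr0.
rewrite (bigD1 g) // [X in _ = _ + X]big1 => [|k /negbTE k_neq]; last first.
  by rewrite !ffunE /= eq_sym k_neq !mul0r.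
rewrite !ffunE /= !caddE !eqxx !addr0 mul1r.
by have [->|] := eqVneq g ((f : H) + t); rewrite ?m_inv ?mulr1 ?mul0r ?mulr0.
Qed.

Section Representation.
Variables (U : finZmodType) (rho : U -> op).
Hypothesis rho_add : forall t t', omul (rho t) (rho t') = rho (t + t').

Lemma omul_sum_rep (h h' : U -> algC) :
  omul (\sum_t h t *: rho t) (\sum_t h' t *: rho t) =
  \sum_u (\sum_t h t * h' (u - t)) *: rho u.
Proof.
rewrite omul_suml.
under eq_bigr => t _.
  rewrite omulZl omul_sumr (reindex_inj (addrI (- t))) /=.
  under eq_bigr do rewrite omulZr rho_add addNKr [- t + _]addrC.
  rewrite scaler_sumr.
  over.
rewrite exchange_big; apply: eq_bigr => u _.
by rewrite scaler_suml; apply: eq_bigr => t _; rewrite scalerA.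
Qed.

End Representation.

End Operators.

Section Projectors.
Variables (X : finType) (deg : X -> int) (a : X -> X -> int)
          (G : int -> finZmodType) (dG : forall n : int, G n -> G (n - 1)).
Hypothesis dG_add : forall n : int, {morph @dG n : g h / g + h}.
Hypothesis a_deg : forall x y, a x y != 0 -> deg y = deg x - 1.
Hypothesis dC_dC : forall x z, \sum_y a x y * a y z = 0.
Hypothesis dG_dG : forall n (g : G n), dG (dG g) = 0.

Local Notation C p := (cochain deg G p).
Local Notation N := (#|{: C (-1)}|%:R : algC).

HB.instance Definition _ p := GRing.isZmodMorphism.Build (C p) (C (p + 1))
  (@delta X deg a G dG p) (delta_is_zmod_morphism a dG_add (p:=p)).

Lemma dual_unit_chars p : @dual X deg G p = @unit_chars (C p).
Proof. by []. Qed.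

Lemma Aop_add (t t' : C (-1)) :
  omul (Aop a dG t) (Aop a dG t') = Aop a dG (t + t').
Proof. by rewrite /Aop omul_Pop raddfD. Qed.

Lemma calAE (s : {ffun C (-1) -> algC}) :
  calA a dG s = N^-1 *: \sum_t s t *: Aop a dG t.
Proof. by rewrite /calA oscaleE; under eq_bigr do rewrite oscaleE. Qed.

Lemma calBE (v : C 1) :
  calB a dG v = Qop [ffun f : C 0 => (v + delta a dG f == 0)%:R].
Proof.
apply/ffunP => -[g f]; rewrite /calB /oscale fsbig_finite; last first.
  exact: (@finite_unit_chars (C 1)).
rewrite ffunE sum_ffunE.
rewrite (eq_big_seq (fun m : {ffun C 1 -> algC} => (g == f)%:R * m (v + delta a dG f))).
  rewrite -mulr_sumr sum_unit_chars_at /card_dual dual_unit_chars card_unit_chars.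
  by rewrite mulrCA [_^-1 * _]mulrCA mulVf ?mulr1 ?ffunE ?natr_card_neq0.
move=> m /mem_unit_chars [_ m_morph]; rewrite !ffunE m_morph /=.
by rewrite mulrCA.
Qed.

Lemma calA_calB_comm (s : {ffun C (-1) -> algC}) (v : C 1) :
  omul (calA a dG s) (calB a dG v) = omul (calB a dG v) (calA a dG s).
Proof.
rewrite calAE calBE omulZl omulZr omul_suml omul_sumr; congr (_ *: _).
apply: eq_bigr => t _; rewrite omulZl omulZr Pop_Qop_comm // => f.
rewrite !ffunE raddfD /=.
by rewrite [delta _ _ (delta _ _ t)](delta_delta dG_add a_deg dC_dC dG_dG) addr0.
Qed.

Lemma calA_mul (s s' : {ffun C (-1) -> algC}) : unit_char s -> unit_char s' ->
  omul (calA a dG s) (calA a dG s') = if s == s' then calA a dG s else 0.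
Proof.
move=> sU s'U; rewrite !calAE omulZl omulZr scalerA (omul_sum_rep Aop_add).
under eq_bigr do rewrite unit_char_conv // -!scalerA.
rewrite -!scaler_sumr !scalerA; case: eqP => [<-|_]; last by rewrite mul0r mulr0 scale0r.
by rewrite mul1r mulfVK ?natr_card_neq0.
Qed.

Lemma calB_mul (v v' : C 1) :
  omul (calB a dG v) (calB a dG v') = if v == v' then calB a dG v else 0.
Proof.
rewrite !calBE omul_Qop; have [<-|v_neq] := eqVneq v v'.
  by congr Qop; apply/ffunP => f; rewrite !ffunE; case: (_ == 0); rewrite ?mulr1 ?mulr0.
apply/ffunP => -[g f]; rewrite !ffunE.
have [vE|] := eqVneq (v + delta a dG f) 0; last by rewrite mul0r mulr0.
by rewrite -vE (inj_eq (addIr _)) [v' == v]eq_sym (negbTE v_neq) !mulr0.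
Qed.

Lemma sum_calA :
  \sum_(s \in @dual X deg G (-1)) calA a dG s = oid deg G.
Proof.
rewrite fsbig_finite; last exact: (@finite_unit_chars (C (-1))).
under eq_bigr do rewrite calAE.
rewrite -scaler_sumr exchange_big /=.
under eq_bigr do
  rewrite -scaler_suml dual_unit_chars (@sum_unit_chars_at (C (-1))) card_unit_chars.
rewrite (bigD1 0) //= big1 => [|t /negbTE ->]; last by rewrite mul0r scale0r.
rewrite eqxx mul1r addr0 scalerA mulVf ?natr_card_neq0 // scale1r.
by rewrite /Aop raddf0 Pop0.
Qed.

Lemma sum_calB : \sum_(v : C 1) calB a dG v = oid deg G.
Proof.
under eq_bigr do rewrite calBE.
rewrite Qop_sum -Qop1; congr Qop; apply/ffunP => f; rewrite !ffunE sum_ffunE.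
rewrite (bigD1 (- delta a dG f)) //= ffunE addNr eqxx big1 ?addr0 // => v v_neq.
by rewrite ffunE addr_eq0 (negbTE v_neq).
Qed.

End Projectors.

Theorem lemma1 (X : finType) (deg : X -> int) (a : X -> X -> int)
    (G : int -> finZmodType) (dG : forall n : int, G n -> G (n - 1))
    (* d^C_n maps C_n to C_{n-1} *)
    (Ha_deg : forall x y : X, a x y != 0 -> deg y = deg x - 1)
    (* d^C o d^C = 0 *)
    (HdCdC : forall x z : X, \sum_(y : X) a x y * a y z = 0)
    (* each d^G_n is a group homomorphism *)
    (HdG_add : forall (n : int) (g h : G n), dG n (g + h) = dG n g + dG n h)
    (* d^G o d^G = 0 *)
    (HdGdG : forall (n : int) (g : G n), dG (n - 1) (dG n g) = 0) :
  [/\ (* (i) *)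
      (forall (s : {ffun cochain deg G (-1) -> algC}) (v : cochain deg G 1),
         @dual X deg G (-1) s ->
         omul (calA a dG s) (calB a dG v) = omul (calB a dG v) (calA a dG s)),
      (* (ii) *)
      (forall s s' : {ffun cochain deg G (-1) -> algC},
         @dual X deg G (-1) s -> @dual X deg G (-1) s' ->
         omul (calA a dG s) (calA a dG s') = if s == s' then calA a dG s else 0),
      (forall v v' : cochain deg G 1,
         omul (calB a dG v) (calB a dG v') = if v == v' then calB a dG v else 0),
      (* (iii) *)
      (\sum_(s \in @dual X deg G (-1)) calA a dG s = oid deg G)
    & (\sum_(v : cochain deg G 1) calB a dG v = oid deg G)].
Proof.
split.
- by move=> s v _; apply: calA_calB_comm.
- by move=> s s'; apply: calA_mul.
- by move=> v v'; apply: calB_mul.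
- exact: sum_calA.
- exact: sum_calB.
Qed.
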